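(* Let $\mathsf{B}$ be a partition of $\mathcal{P}([n])$ into branches of the form $\mathcal{B}=\mathcal{C}(I,E)$ with $I,E\subseteq[n]$ disjoint, and suppose for each $\mathcal{B}\in\mathsf{B}$ real numbers $\underline{v}_{\mathcal{B}}\le\overline{v}_{\mathcal{B}}$ satisfy $\underline{v}_{\mathcal{B}}\le v(S)\le\overline{v}_{\mathcal{B}}$ for all $S\in\mathcal{B}$. For $i\in[n]$ let $\mathsf{B}_{+i}:=\{\mathcal{C}(I,E)\in\mathsf{B}: i\in I\}$, $\mathsf{B}_{-i}:=\{\mathcal{C}(I,E)\in\mathsf{B}: i\in E\}$, and $\mathsf{B}_{\pm i}:=\mathsf{B}\setminus(\mathsf{B}_{+i}\cup\mathsf{B}_{-i})$. For $\mathcal{B}=\mathcal{C}(I,E)$ with $r:=|I|$, $s:=|I|+|E|$, put $\Lambda_{\mathcal{B}}:=\frac{1}{(s+1)\binom{s}{r}}$, $\Lambda^-_{\mathcal{B}}:=\Lambda_{\mathcal{B}}\frac{s+1}{r}$ (for $r\ge1$) and $\Lambda^+_{\mathcal{B}}:=\Lambda_{\mathcal{B}}\frac{s+1}{s-r}$ (for $s>r$). Then for every $i\in[n]$, $$\sum_{\mathcal{B}\in\mathsf{B}_{+i}}\Lambda^-_{\mathcal{B}}\underline{v}_{\mathcal{B}}+\sum_{\mathcal{B}\in\mathsf{B}_{\pm i}}\Lambda_{\mathcal{B}}(\underline{v}_{\mathcal{B}}-\overline{v}_{\mathcal{B}})-\sum_{\mathcal{B}\in\mathsf{B}_{-i}}\Lambda^+_{\mathcal{B}}\overline{v}_{\mathcal{B}}\;\le\;\varphi_i\;\le\;\sum_{\mathcal{B}\in\mathsf{B}_{+i}}\Lambda^-_{\mathcal{B}}\overline{v}_{\mathcal{B}}+\sum_{\mathcal{B}\in\mathsf{B}_{\pm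 i}}\Lambda_{\mathcal{B}}(\overline{v}_{\mathcal{B}}-\underline{v}_{\mathcal{B}})-\sum_{\mathcal{B}\in\mathsf{B}_{-i}}\Lambda^+_{\mathcal{B}}\underline{v}_{\mathcal{B}}.$$
   Context: Let $f:\mathbb{R}^n\to\mathbb{R}$, $\mathbf{x}\in\mathbb{R}^n$, $\mathcal{D}$ a distribution on $\mathbb{R}^n$, and $v(S):=\mathbb{E}_{\mathbf{z}\sim\mathcal{D}}[f(\mathbf{x}_S;\mathbf{z}_{\bar S})]$ for $S\subseteq[n]$, where $(\mathbf{x}_S;\mathbf{z}_{\bar S})_j=x_j$ if $j\in S$ and $z_j$ otherwise. $\omega(k):=\frac1n\binom{n-1}{k}^{-1}$, $\Delta_i(S):=v(S\cup\{i\})-v(S)$, $\varphi_i:=\sum_{S\subseteq[n]\setminus\{i\}}\omega(|S|)\Delta_i(S)$. For disjoint $I,E\subseteq[n]$, $\mathcal{C}(I,E):=\{S\subseteq[n]: I\subseteq S,\ E\cap S=\emptyset\}$. *)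

From HB Require Import structures.
From mathcomp Require Import all_boot all_order all_algebra.
From mathcomp Require Import all_classical all_reals all_analysis.
Set Implicit Arguments. Unset Strict Implicit. Unset Printing Implicit Defensive.
Import Order.TTheory GRing.Theory Num.Theory.
Local Open Scope ring_scope.

Definition mixv (R : Type) (n : nat) (x z : 'I_n -> R) (S : {set 'I_n}) : 'I_n -> R :=
  fun j => if j \in S then x j else z j.

(* v(S) = E_{z ~ D}[ f(x_S ; z_{\bar S}) ], where D is the law of the random
   vector Z : T -> R^n on the probability space (T, P). *)
Definition vfun (d : measure_display) (T : measurableType d) (R : realType)
  (P : probability T R) (n : nat) (f : ('I_n -> R) -> R) (x : 'I_n -> R)
  (Z : T -> 'I_n -> R) (S : {set 'I_n}) : R :=
  Rintegral P setT (fun t => f (mixv x (Z t) S)).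

Definition shap_w (R : realType) (n k : nat) : R :=
  n%:R^-1 * ('C(n.-1, k))%:R^-1.

Definition shapley (R : realType) (n : nat) (v : {set 'I_n} -> R) (i : 'I_n) : R :=
  \sum_(S : {set 'I_n} | i \notin S) shap_w R n #|S| * (v (i |: S) - v S).

Definition in_branch (n : nat) (b : {set 'I_n} * {set 'I_n}) (S : {set 'I_n}) : bool :=
  (b.1 \subset S) && [disjoint b.2 & S].

Definition branch_partition (n : nat) (B : {set {set 'I_n} * {set 'I_n}}) : Prop :=
  (forall b, b \in B -> [disjoint b.1 & b.2]) /\
  (forall S : {set 'I_n}, exists! b, b \in B /\ in_branch b S).

Definition Lam (R : realType) (n : nat) (b : {set 'I_n} * {set 'I_n}) : R :=
  let r := #|b.1| in let s := (#|b.1| + #|b.2|)%N in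
  (s.+1%:R * ('C(s, r))%:R)^-1.
Definition LamM (R : realType) (n : nat) (b : {set 'I_n} * {set 'I_n}) : R :=
  let r := #|b.1| in let s := (#|b.1| + #|b.2|)%N in
  Lam R b * (s.+1%:R / r%:R).
Definition LamP (R : realType) (n : nat) (b : {set 'I_n} * {set 'I_n}) : R :=
  let r := #|b.1| in let s := (#|b.1| + #|b.2|)%N in
  Lam R b * (s.+1%:R / (s - r)%:R).

From HB Require Import structures.
From mathcomp Require Import all_boot all_order all_algebra.
From mathcomp Require Import all_classical all_reals all_analysis.
From mathcomp Require Import ring lra zify.
Import Order.TTheory GRing.Theory Num.Theory.
Local Open Scope ring_scope.

(* Write the Shapley value as a signed weighted sum of the values v(S), with
   weight omega(|S|-1) when i is in S and -omega(|S|) otherwise, and cut this sum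
   along the branches.  On a branch C(I,E) with i in I (resp. i in E) all terms
   have the same sign and the weights add up to Lambda^- (resp. Lambda^+); on a
   branch where i is free, the terms pair up as omega(|S|) (v(S+i) - v(S)) and
   these weights add up to Lambda.  All the weight sums are instances of one
   identity for the Beta integral B(j,l) = j! l! / (j+l+1)!: summing
   B(|S| - a, |~S| - b) over a branch C(I,E) gives B(|I| - a, |E| - b), by
   induction on the number of free elements using
   B(j+1,l) + B(j,l+1) = B(j,l). *)

Lemma disjoint_setU1 (T : finType) (x : T) (A B : {set T}) :
  [disjoint x |: A & B] = (x \notin B) && [disjoint A & B].
Proof.
by rewrite !finset.disjoints_subset finset.subUset finset.sub1set finset.in_setC.
Qed.

Lemma cardsC_setU1 (T : finType) (x : T) (A : {set T}) :
  x \notin A -> #|~: (x |: A)| = #|~: A|.-1.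
Proof.
move=> xA; have := cardsC A; have := cardsC (x |: A); rewrite cardsU1 xA; lia.
Qed.

Lemma big_setU1_reindex (T : finType) (V : nmodType) (x : T) (P : pred {set T})
    (F : {set T} -> V) :
  \sum_(S : {set T} | (x \in S) && P S) F S
  = \sum_(S : {set T} | (x \notin S) && P (x |: S)) F (x |: S).
Proof.
rewrite (reindex_onto (fun S : {set T} => x |: S) (fun S => S :\ x)) /=; last first.
  by move=> S /andP [xS _]; rewrite finset.setD1K.
apply: eq_bigl => S; apply/idP/idP => [/andP [/andP [_ PxS] /eqP <-]|/andP [xS PxS]].
  by rewrite !finset.inE eqxx /= finset.setD1K // finset.setU11.
by rewrite finset.setU11 PxS (finset.setU1K xS) eqxx.
Qed.

Lemma ler_sum_sandwich (R : numDomainType) (T : finType) (P : pred T) (f g h : T -> R) :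
  (forall t, P t -> f t <= g t <= h t) ->
  \sum_(t | P t) f t <= \sum_(t | P t) g t <= \sum_(t | P t) h t.
Proof.
move=> fgh; apply/andP; split; apply: ler_sum => t Pt; by case/andP: (fgh t Pt).
Qed.

Lemma sum_weighted_bounds (R : numDomainType) (T : finType) (P : pred T)
    (w g : T -> R) (lo hi : R) :
  (forall t, P t -> 0 <= w t) -> (forall t, P t -> lo <= g t <= hi) ->
  (\sum_(t | P t) w t) * lo <= \sum_(t | P t) w t * g t <= (\sum_(t | P t) w t) * hi.
Proof.
move=> w_ge0 g_in; rewrite !mulr_suml; apply: ler_sum_sandwich => t Pt.
by case/andP: (g_in t Pt) => lo_g g_hi; rewrite !ler_wpM2l ?w_ge0.
Qed.

Section Beta.
Variable R : realType.

Definition beta_nat (j l : nat) : R := (j`! * l`!)%:R / (j + l).+1`!%:R.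

Lemma natr_fact_neq0 k : (k`!)%:R != 0 :> R.
Proof. by rewrite pnatr_eq0 -lt0n fact_gt0. Qed.

Local Ltac natr_neq0 := repeat (apply/andP; split); try assumption;
  apply: lt0r_neq0; rewrite ?ltr_wpDr ?ltr_wpDl ?addr_ge0 //.

Lemma beta_pascal j l : beta_nat j.+1 l + beta_nat j l.+1 = beta_nat j l.
Proof.
rewrite /beta_nat addSn addnS !factS !natrM.
move: (natr_fact_neq0 (j + l)) (natr_fact_neq0 j) (natr_fact_neq0 l).
move: (j + l)`!%:R (j`!%:R) (l`!%:R) => F G H hF hG hH.
by field; natr_neq0.
Qed.

Lemma beta_succl j l : beta_nat j.+1 l * ((j.+1 + l).+1%:R / j.+1%:R) = beta_nat j l.
Proof.
rewrite /beta_nat addSn !factS !natrM.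
move: (natr_fact_neq0 (j + l)) (natr_fact_neq0 j) (natr_fact_neq0 l).
move: (j + l)`!%:R (j`!%:R) (l`!%:R) => F G H hF hG hH.
by field; natr_neq0.
Qed.

Lemma beta_succr j l : beta_nat j l.+1 * ((j + l.+1).+1%:R / l.+1%:R) = beta_nat j l.
Proof.
rewrite /beta_nat addnS !factS !natrM.
move: (natr_fact_neq0 (j + l)) (natr_fact_neq0 j) (natr_fact_neq0 l).
move: (j + l)`!%:R (j`!%:R) (l`!%:R) => F G H hF hG hH.
by field; natr_neq0.
Qed.

Lemma shap_w_beta n k l : (k + l).+1 = n -> shap_w R n k = beta_nat k l.
Proof.
move=> <-; rewrite /shap_w /beta_nat /= factS -(bin_fact (leq_addr l k)) addKn !natrM.
have : ('C(k + l, k))%:R != 0 :> R by rewrite pnatr_eq0 -lt0n bin_gt0 leq_addr.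
move: (natr_fact_neq0 k) (natr_fact_neq0 l).
move: ('C(k + l, k))%:R (k`!%:R) (l`!%:R) => C G H hG hH hC.
by field; natr_neq0.
Qed.

Lemma shap_w_ge0 n k : 0 <= shap_w R n k.
Proof. by rewrite /shap_w mulr_ge0 // invr_ge0 ler0n. Qed.

Lemma Lam_beta n (b : {set 'I_n} * {set 'I_n}) : Lam R b = beta_nat #|b.1| #|b.2|.
Proof. by rewrite -(shap_w_beta _ _ _ (erefl _)) /Lam /shap_w invfM. Qed.

Lemma LamM_beta n (b : {set 'I_n} * {set 'I_n}) :
  (0 < #|b.1|)%N -> LamM R b = beta_nat #|b.1|.-1 #|b.2|.
Proof. by rewrite /LamM Lam_beta; case: #|b.1| => [|j] // _; apply: beta_succl. Qed.

Lemma LamP_beta n (b : {set 'I_n} * {set 'I_n}) :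
  (0 < #|b.2|)%N -> LamP R b = beta_nat #|b.1| #|b.2|.-1.
Proof.
by rewrite /LamP Lam_beta addKn; case: #|b.2| => [|l] // _; apply: beta_succr.
Qed.

End Beta.

Section Branches.
Variable n : nat.
Implicit Types (I E S : {set 'I_n}) (j : 'I_n).

Lemma in_branch_setU1l I E S j :
  in_branch (j |: I, E) S = in_branch (I, E) S && (j \in S).
Proof.
rewrite /in_branch /= finset.subUset finset.sub1set.
by case: (j \in S); rewrite ?andbT ?andbF.
Qed.

Lemma in_branch_setU1r I E S j :
  in_branch (I, j |: E) S = in_branch (I, E) S && (j \notin S).
Proof.
rewrite /in_branch /= !finset.disjoints_subset finset.subUset finset.sub1set finset.in_setC.
by case: (j \in S); rewrite ?andbT ?andbF.
Qed.

Lemma in_branch_setU1_free I E S j : j \notin I -> j \notin E ->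
  in_branch (I, E) (j |: S) = in_branch (I, E) S.
Proof.
move=> jI jE; rewrite /in_branch /= ![[disjoint E & _]]disjoint_sym.
rewrite disjoint_setU1 jE; congr (_ && _).
apply/idP/idP => [/fintype.subsetP sIjS|/fintype.subset_trans -> //].
  apply/fintype.subsetP => x xI; move: (sIjS x xI); rewrite finset.in_setU1.
  by case/orP => [/eqP xj|//]; rewrite -xj xI in jI.
exact: finset.subsetU1.
Qed.

Lemma setC_cover I E : I :|: E = [set: 'I_n] -> [disjoint I & E] -> ~: I = E.
Proof.
move=> cov dis; apply/finset.setP => x; rewrite finset.in_setC.
have := finset.in_setT x; rewrite -cov finset.in_setU => /orP [xI|xE].
  by rewrite xI (disjointFr dis xI).
by rewrite xE (disjointFl dis xE).
Qed.

Lemma in_branch_cover I E S : I :|: E = [set: 'I_n] -> [disjoint I & E] ->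
  in_branch (I, E) S = (S == I).
Proof.
move=> cov dis; rewrite /in_branch /= disjoint_sym finset.disjoints_subset.
rewrite (setC_cover E I); first by rewrite eq_sym finset.eqEsubset.
  by rewrite finset.setUC.
by rewrite disjoint_sym.
Qed.

End Branches.

Section BranchSums.
Variables (R : realType) (n : nat).
Implicit Types (I E S : {set 'I_n}).

Lemma sum_branch_beta I E a b : [disjoint I & E] -> (a <= #|I|)%N -> (b <= #|E|)%N ->
  \sum_(S | in_branch (I, E) S) beta_nat R (#|S| - a) (#|~: S| - b)
  = beta_nat R (#|I| - a) (#|E| - b).
Proof.
move eqk : #|~: (I :|: E)| => k.
elim: k I E eqk => [|k IH] I E eqk dis ha hb.
  have cov : I :|: E = [set: 'I_n].
    by apply: finset.setC_inj; rewrite finset.setCT; apply: finset.cards0_eq.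
  rewrite (eq_bigl _ _ (fun S => @in_branch_cover _ I E S cov dis)) big_pred1_eq.
  by rewrite (@setC_cover _ I E cov dis).
have [j jF] : exists j, j \in ~: (I :|: E) by apply/set0Pn; rewrite -card_gt0 eqk.
have jIE : j \notin I :|: E by rewrite -finset.in_setC.
move: jF; rewrite finset.in_setC finset.in_setU negb_or => /andP [jI jE].
rewrite (bigID (fun S => j \in S)) /=.
rewrite (eq_bigl _ _ (fun S => esym (@in_branch_setU1l _ I E S j))).
rewrite (eq_bigl _ _ (fun S => esym (@in_branch_setU1r _ I E S j))).
rewrite (IH (j |: I) E) ?(IH I (j |: E)) ?cardsU1 ?jI ?jE ?add1n //.
- by rewrite (subSn ha) (subSn hb) beta_pascal.
- by rewrite finset.setUCA cardsC_setU1 // eqk.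
- by rewrite disjoint_sym disjoint_setU1 jI disjoint_sym.
- exact: leqW.
- by rewrite -finset.setUA cardsC_setU1 // eqk.
- by rewrite disjoint_setU1 jE.
- exact: leqW.
Qed.

Lemma sum_branch_shap_w I E : [disjoint I & E] -> (0 < #|E|)%N ->
  \sum_(S | in_branch (I, E) S) shap_w R n #|S| = beta_nat R #|I| #|E|.-1.
Proof.
move=> dis E0; rewrite -[in RHS]subn1 -[in RHS](subn0 #|I|) -sum_branch_beta //.
apply: eq_bigr => S /andP [_ dES]; rewrite subn0; apply: shap_w_beta.
have : (#|E| <= #|~: S|)%N by apply: subset_leq_card; rewrite -finset.disjoints_subset.
have := cardsC S; rewrite card_ord; lia.
Qed.

Lemma sum_branch_shap_w_pred I E : [disjoint I & E] -> (0 < #|I|)%N ->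
  \sum_(S | in_branch (I, E) S) shap_w R n #|S|.-1 = beta_nat R #|I|.-1 #|E|.
Proof.
move=> dis I0; rewrite -[in RHS]subn1 -[in RHS](subn0 #|E|) -sum_branch_beta //.
apply: eq_bigr => S /andP [sIS _]; rewrite subn1 subn0; apply: shap_w_beta.
have : (#|I| <= #|S|)%N by apply: subset_leq_card.
have := cardsC S; rewrite card_ord; lia.
Qed.

End BranchSums.

Lemma big_branch_partition (V : nmodType) n (B : {set {set 'I_n} * {set 'I_n}}) :
  (forall S, exists! b, b \in B /\ in_branch b S) ->
  forall F : {set 'I_n} -> V,
  \sum_S F S = \sum_(b in B) \sum_(S | in_branch b S) F S.
Proof.
move=> part F; under [RHS]eq_bigr do rewrite big_mkcond.
rewrite exchange_big /=; apply: eq_bigr => S _.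
have [b0 [[b0B S_b0] b0_uniq]] := part S.
rewrite (bigD1 b0) //= S_b0 big1 ?addr0 // => b /andP [bB b_b0].
by case: ifP => // S_b; rewrite (b0_uniq b (conj bB S_b)) eqxx in b_b0.
Qed.

Section ShapleyBranches.
Variables (R : realType) (n : nat) (v : {set 'I_n} -> R) (i : 'I_n).
Implicit Types (S : {set 'I_n}) (b : {set 'I_n} * {set 'I_n}).

Definition shapley_coef S : R :=
  if i \in S then shap_w R n #|S|.-1 else - shap_w R n #|S|.

Definition shapley_branch b : R :=
  \sum_(S | in_branch b S) shapley_coef S * v S.

Lemma shapleyE : shapley v i = \sum_S shapley_coef S * v S.
Proof.
rewrite /shapley [RHS](bigID (fun S => i \in S)) /=.
under eq_bigr do rewrite mulrBr.
rewrite sumrB -sumrN; congr (_ + _); last first.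
  by apply: eq_bigr => S /negbTE iS; rewrite /shapley_coef iS mulNr.
rewrite -(eq_bigl _ _ (fun S => andbT (i \in S))) big_setU1_reindex.
apply: eq_big => [S|S iS]; first by rewrite andbT.
by rewrite /shapley_coef finset.setU11 cardsU1 (negbTE iS).
Qed.

Lemma shapley_sum_branches (B : {set {set 'I_n} * {set 'I_n}}) :
  (forall S, exists! b, b \in B /\ in_branch b S) ->
  shapley v i = \sum_(b in B) shapley_branch b.
Proof. by move=> part; rewrite shapleyE (@big_branch_partition _ _ _ part). Qed.

Lemma shapley_branch_free b : i \notin b.1 -> i \notin b.2 ->
  shapley_branch b
  = \sum_(S | in_branch b S && (i \notin S)) shap_w R n #|S| * (v (i |: S) - v S).
Proof.
case: b => I E /= iI iE; rewrite /shapley_branch (bigID (fun S => i \in S)) /=.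
under eq_bigl do rewrite andbC.
rewrite big_setU1_reindex.
under [X in X + _]eq_bigl do rewrite in_branch_setU1_free // andbC.
rewrite -big_split; apply: eq_bigr => S /andP [_ iS].
by rewrite /shapley_coef finset.setU11 cardsU1 iS (negbTE iS) mulrBr mulNr.
Qed.

Lemma shapley_branch_bounds_in b lo hi : [disjoint b.1 & b.2] -> i \in b.1 ->
    (forall S, in_branch b S -> lo <= v S <= hi) ->
  LamM R b * lo <= shapley_branch b <= LamM R b * hi.
Proof.
case: b => I E /= dis iI bnd.
have I0 : (0 < #|I|)%N by apply/card_gt0P; exists i.
have -> : shapley_branch (I, E)
    = \sum_(S | in_branch (I, E) S) shap_w R n #|S|.-1 * v S.
  by apply: eq_bigr => S /andP [sIS _]; rewrite /shapley_coef (fintype.subsetP sIS _ iI).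
rewrite (@LamM_beta R n (I, E) I0) -(@sum_branch_shap_w_pred R n I E dis I0).
by apply: sum_weighted_bounds => S S_b; [exact: shap_w_ge0 | exact: bnd].
Qed.

Lemma shapley_branch_bounds_notin b lo hi : [disjoint b.1 & b.2] -> i \in b.2 ->
    (forall S, in_branch b S -> lo <= v S <= hi) ->
  - (LamP R b * hi) <= shapley_branch b <= - (LamP R b * lo).
Proof.
case: b => I E /= dis iE bnd.
have E0 : (0 < #|E|)%N by apply/card_gt0P; exists i.
have -> : shapley_branch (I, E)
    = - \sum_(S | in_branch (I, E) S) shap_w R n #|S| * v S.
  rewrite -sumrN; apply: eq_bigr => S /andP [_ dES].
  by rewrite /shapley_coef (disjointFr dES iE) mulNr.
rewrite !lerN2 andbC (@LamP_beta R n (I, E) E0) -(@sum_branch_shap_w R n I E dis E0).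
by apply: sum_weighted_bounds => S S_b; [exact: shap_w_ge0 | exact: bnd].
Qed.

Lemma shapley_branch_bounds_free b lo hi : [disjoint b.1 & b.2] ->
    i \notin b.1 -> i \notin b.2 -> (forall S, in_branch b S -> lo <= v S <= hi) ->
  Lam R b * (lo - hi) <= shapley_branch b <= Lam R b * (hi - lo).
Proof.
case: b => I E /= dis iI iE bnd.
have -> : Lam R (I, E) = \sum_(S | in_branch (I, E) S && (i \notin S)) shap_w R n #|S|.
  under eq_bigl do rewrite -in_branch_setU1r.
  rewrite sum_branch_shap_w ?cardsU1 ?iE ?Lam_beta //.
  by rewrite disjoint_sym disjoint_setU1 iI disjoint_sym.
rewrite shapley_branch_free //.
apply: sum_weighted_bounds => S /andP [S_b iS]; first exact: shap_w_ge0.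
have /andP [lo_S S_hi] := bnd S S_b.
have /andP [lo_iS iS_hi] := bnd (i |: S) (etrans (in_branch_setU1_free _ _ _ _ _ iI iE) S_b).
by apply/andP; split; lra.
Qed.

Lemma sum_branches_split (B : {set {set 'I_n} * {set 'I_n}}) (F : _ -> R) :
    (forall b, b \in B -> [disjoint b.1 & b.2]) ->
  \sum_(b in B) F b = \sum_(b in B | i \in b.1) F b
    + \sum_(b in B | (i \notin b.1) && (i \notin b.2)) F b + \sum_(b in B | i \in b.2) F b.
Proof.
move=> dis; rewrite (bigID (fun b => i \in b.1)) /= -addrA; congr (_ + _).
rewrite (bigID (fun b => i \in b.2)) /= addrC; congr (_ + _).
  by apply: eq_bigl => b; rewrite andbA.
apply: eq_bigl => b; case: (boolP (b \in B)) => //= bB.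
by case: (boolP (i \in b.2)) => [ib2|]; rewrite ?andbT ?andbF ?(disjointFl (dis b bB) ib2).
Qed.

Lemma shapley_bounds_of_branch_bounds (B : {set {set 'I_n} * {set 'I_n}})
    (lo hi : {set 'I_n} * {set 'I_n} -> R) :
  branch_partition B -> (forall b S, b \in B -> in_branch b S -> lo b <= v S <= hi b) ->
    \sum_(b in B | i \in b.1) LamM R b * lo b
    + \sum_(b in B | (i \notin b.1) && (i \notin b.2)) Lam R b * (lo b - hi b)
    - \sum_(b in B | i \in b.2) LamP R b * hi b
    <= shapley v i <=
    \sum_(b in B | i \in b.1) LamM R b * hi b
    + \sum_(b in B | (i \notin b.1) && (i \notin b.2)) Lam R b * (hi b - lo b)
    - \sum_(b in B | i \in b.2) LamP R b * lo b.
Proof.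
move=> [dis part] bnd; rewrite (shapley_sum_branches _ part) (sum_branches_split _ _ dis).
have /andP [in_lo in_hi] :
  \sum_(b in B | i \in b.1) LamM R b * lo b <= \sum_(b in B | i \in b.1) shapley_branch b
    <= \sum_(b in B | i \in b.1) LamM R b * hi b.
  apply: ler_sum_sandwich => b /andP [bB ib].
  exact: shapley_branch_bounds_in _ _ _ (dis b bB) ib (fun S => bnd b S bB).
have /andP [free_lo free_hi] :
  \sum_(b in B | (i \notin b.1) && (i \notin b.2)) Lam R b * (lo b - hi b)
    <= \sum_(b in B | (i \notin b.1) && (i \notin b.2)) shapley_branch b
    <= \sum_(b in B | (i \notin b.1) && (i \notin b.2)) Lam R b * (hi b - lo b).
  apply: ler_sum_sandwich => b /andP [bB /andP [ib1 ib2]].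
  exact: shapley_branch_bounds_free _ _ _ (dis b bB) ib1 ib2 (fun S => bnd b S bB).
have /andP [out_lo out_hi] :
  - \sum_(b in B | i \in b.2) LamP R b * hi b <= \sum_(b in B | i \in b.2) shapley_branch b
    <= - \sum_(b in B | i \in b.2) LamP R b * lo b.
  rewrite -!sumrN; apply: ler_sum_sandwich => b /andP [bB ib].
  exact: shapley_branch_bounds_notin _ _ _ (dis b bB) ib (fun S => bnd b S bB).
by apply/andP; split; lra.
Qed.

End ShapleyBranches.

Theorem mainTheorem7 (R : realType) (n : nat)
  (d : measure_display) (T : measurableType d) (P : probability T R)
  (f : ('I_n -> R) -> R) (x : 'I_n -> R) (Z : T -> 'I_n -> R)
  (B : {set {set 'I_n} * {set 'I_n}})
  (lo hi : {set 'I_n} * {set 'I_n} -> R) :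
  branch_partition B ->
  (forall b, b \in B -> lo b <= hi b) ->
  (forall b S, b \in B -> in_branch b S ->
     lo b <= vfun P f x Z S <= hi b) ->
  forall i : 'I_n,
    \sum_(b in B | i \in b.1) LamM R b * lo b
    + \sum_(b in B | (i \notin b.1) && (i \notin b.2)) Lam R b * (lo b - hi b)
    - \sum_(b in B | i \in b.2) LamP R b * hi b
    <= shapley (vfun P f x Z) i <=
    \sum_(b in B | i \in b.1) LamM R b * hi b
    + \sum_(b in B | (i \notin b.1) && (i \notin b.2)) Lam R b * (hi b - lo b)
    - \sum_(b in B | i \in b.2) LamP R b * lo b.
Proof.
move=> part _ bnd i.
exact: shapley_bounds_of_branch_bounds part bnd.
Qed.
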